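(* Let $k$ be a positive integer and $F$ a 2-factor on $n$ vertices. Then there exists a partition of $V(F)$ into parts $U_0,U_1,\dots,U_{\lfloor n/k\rfloor}$ such that $|U_i|=k$ for all $1\le i\le\lfloor n/k\rfloor$ (hence $|U_0|<k$), and such that for every $0\le i\le\lfloor n/k\rfloor$, the subgraph of $F$ induced by $U_i$ is a disjoint union of cycles and at most $2$ paths. In particular, for every $1\le i\le\lfloor n/k\rfloor$, $F[U_i]$ contains at least $k-2$ edges.
   Context: A 2-factor on $n$ vertices is a 2-regular graph on $n$ vertices. *)

From mathcomp Require Import all_boot.
Set Implicit Arguments. Unset Strict Implicit. Unset Printing Implicit Defensive.

Definition simple_graph (T : finType) (e : rel T) : Prop :=
  symmetric e /\ irreflexive e.

Definition two_factor (T : finType) (e : rel T) : Prop :=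
  simple_graph e /\ forall x : T, #|[set y | e x y]| = 2.

(* The subgraph induced by C is a path: there is a nonempty duplicate-free
   enumeration s of C such that two vertices of C are adjacent iff they are
   consecutive in s.  (A single vertex is a path of length 0.) *)
Definition induces_path (T : finType) (e : rel T) (C : {set T}) : Prop :=
  exists s : seq T, [/\ s != [::], uniq s, C =i s &
    forall x y, x \in C -> y \in C ->
      e x y = ((x, y) \in zip s (behead s)) || ((y, x) \in zip s (behead s))].

Definition induces_cycle (T : finType) (e : rel T) (C : {set T}) : Prop :=
  exists s : seq T, [/\ 3 <= size s, uniq s, C =i s &
    forall x y, x \in C -> y \in C ->
      e x y = (y == next s x) || (x == next s y)].

(* F[U] is a disjoint union of cycles and at most two paths: U is partitioned
   into blocks Pc (inducing cycles) and Pp (inducing paths), with no edges of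
   F between distinct blocks, and at most 2 path blocks. *)
Definition cycles_and_at_most_2_paths (T : finType) (e : rel T) (U : {set T})
  : Prop :=
  exists Pc Pp : {set {set T}},
    [/\ partition (Pc :|: Pp) U /\ [disjoint Pc & Pp],
        (forall C, C \in Pc -> induces_cycle e C),
        (forall C, C \in Pp -> induces_path e C),
        (forall C D, C \in Pc :|: Pp -> D \in Pc :|: Pp -> C != D ->
           forall x y, x \in C -> y \in D -> ~~ e x y)
      & #|Pp| <= 2].

Definition n_edges_in (T : finType) (e : rel T) (U : {set T}) : nat :=
  #|[set [set x; y] | x in U, y in U & e x y]|.

From mathcomp Require Import all_boot.
From mathcomp Require Import zify.
Set Implicit Arguments. Unset Strict Implicit. Unset Printing Implicit Defensive.

(* A 2-factor is a disjoint union of cycles.  Listing the cycles one after the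
   other enumerates the vertices so that every cycle occupies consecutive
   positions; the parts are consecutive segments of length k of this
   enumeration, U_0 being the remainder.  A segment meets each cycle in
   consecutive positions of that cycle: either the whole cycle, or a proper arc,
   which induces a path.  A cycle is cut only if it contains the first or the
   last position of the segment, so at most two paths occur.  Since a cycle on
   m vertices has m edges and a path m - 1, F[U_i] has at least k - 2 edges. *)

Section SeqWindows.
Variable T : eqType.
Implicit Types (s : seq T) (x y : T).

Lemma index_drop_uniq s u x : uniq s -> x \in drop u s ->
  index x s = u + index x (drop u s).
Proof.
move=> us xd; have u_lt : u < size s.
  by rewrite -subn_gt0 -size_drop; case: (drop u s) xd.
rewrite -[in index x s](cat_take_drop u s) index_cat size_takel ?(ltnW u_lt) //.
have : uniq (take u s ++ drop u s) by rewrite cat_take_drop.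
rewrite cat_uniq => /and3P[_ dis _].
by rewrite (negbTE (hasPn dis x xd)).
Qed.

Lemma mem_drop_uniq s u x : uniq s -> (x \in drop u s) = (x \in s) && (u <= index x s).
Proof.
move=> us; apply/idP/andP=> [xd | [xs le_u]].
  by split; [exact: mem_drop xd | rewrite (index_drop_uniq us xd) leq_addr].
have : x \in take u s ++ drop u s by rewrite cat_take_drop.
by rewrite mem_cat in_take // ltnNge le_u.
Qed.

Lemma index_take_in s m x : x \in take m s -> index x (take m s) = index x s.
Proof. by move=> xt; rewrite -[in index x s](cat_take_drop m s) index_cat xt. Qed.

Lemma mem_take_drop_uniq s u m x : uniq s ->
  (x \in take m (drop u s)) = (x \in s) && (u <= index x s < u + m).
Proof.
move=> us; have [xd | xnd] := boolP (x \in drop u s).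
  rewrite in_take // -(ltn_add2l u) -(index_drop_uniq us xd).
  by move: xd; rewrite mem_drop_uniq // => /andP[-> ->].
rewrite (contraNF (@mem_take m _ _ x) xnd).
by move: xnd; rewrite mem_drop_uniq // negb_and => /orP[/negbTE -> | ] //; lia.
Qed.

Lemma index_take_drop_uniq s u m x : uniq s -> x \in take m (drop u s) ->
  index x (take m (drop u s)) = index x s - u.
Proof.
move=> us xw; rewrite index_take_in // (index_drop_uniq us (mem_take xw)).
by rewrite addKn.
Qed.

Lemma mem_zip_behead s x y : uniq s ->
  ((x, y) \in zip s (behead s)) =
  [&& x \in s, y \in s & index y s == (index x s).+1].
Proof.
elim: s => [|a [|b s] IH]; rewrite ?cons_uniq // => /andP[a_bs ubs].
  by apply/esym/and3P => -[]; rewrite !inE => /eqP-> /eqP->; rewrite ltn_eqF.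
have idx z : index z [:: a, b & s] = if a == z then 0 else (index z (b :: s)).+1.
  by [].
rewrite [zip _ _]/= [_ \in (a, b) :: _]in_cons xpair_eqE IH // !idx !(in_cons a).
have [-> | xa] := eqVneq x a.
  rewrite (negbTE a_bs) andFb orbF /=.
  have [<- | ay] := eqVneq a y.
    by rewrite andbF; apply/negbTE; apply: contraNneq a_bs => ->; apply: mem_head.
  rewrite eqSS; have [<- | b_y] := eqVneq b y; first by rewrite mem_head orbT.
  by rewrite andbF.
rewrite andFb orFb.
have [<- | ay] := eqVneq a y; first by rewrite (negbTE a_bs) !andbF.
by rewrite orFb eqSS.
Qed.

Lemma index_next s x : uniq s -> x \in s ->
  index (next s x) s = if (index x s).+1 == size s then 0 else (index x s).+1.
Proof.
rewrite next_nth; case: s => [|y s] // us xs; rewrite xs.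
have : index x (y :: s) < (size s).+1 by rewrite index_mem.
rewrite ltnS leq_eqVlt => /orP[/eqP-> | lt_s].
  by rewrite eqxx nth_default //= eqxx.
rewrite eqSS ltn_eqF // -[nth y s _]/(nth y (y :: s) (index x (y :: s)).+1).
by rewrite index_uniq.
Qed.

Lemma next_neq_prev s x : uniq s -> 3 <= size s -> x \in s -> next s x != prev s x.
Proof.
move=> us s3 xs; apply/eqP => nx_px.
have nnx : next s (next s x) = x by rewrite nx_px next_prev.
have := index_next us (etrans (mem_next s x) xs); rewrite nnx (index_next us xs).
have := index_size x s; rewrite -index_mem in xs.
by case: eqP; case: eqP; lia.
Qed.

Lemma uniq_flatten_mem (cs : seq (seq T)) c1 c2 x : uniq (flatten cs) ->
  c1 \in cs -> c2 \in cs -> x \in c1 -> x \in c2 -> c1 = c2.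
Proof.
move=> ucs c1_cs c2_cs xc1 xc2; move: ucs c2_cs; case/splitPr: c1_cs => cs1 cs2.
rewrite flatten_cat /= !cat_uniq => /and3P[_ /hasPn dis1 /and3P[_ /hasPn dis2 _]].
rewrite mem_cat in_cons => /or3P[c2_cs1 | /eqP // | c2_cs2].
  by have := dis1 x; rewrite mem_cat xc1 => /(_ isT)/flattenP[]; exists c2.
have x_cs2 : x \in flatten cs2 by apply/flattenP; exists c2.
by have := dis2 x x_cs2; rewrite xc1.
Qed.

Lemma index_flatten (cs : seq (seq T)) c : uniq (flatten cs) -> c \in cs ->
  exists o, forall y, y \in c -> index y (flatten cs) = o + index y c.
Proof.
move=> ucs c_cs; move: ucs; case/splitPr: c_cs => cs1 cs2.
rewrite flatten_cat /= cat_uniq => /and3P[_ /hasPn dis _].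
exists (size (flatten cs1)) => y yc.
by rewrite index_cat (negbTE (dis y _)) ?index_cat ?yc // mem_cat yc.
Qed.
End SeqWindows.

Section InducedEdges.
Variables (T : finType) (e : rel T).
Implicit Types (C U : {set T}) (P : {set {set T}}).

Lemma n_edges_in_partition P U :
  partition P U -> \sum_(C in P) n_edges_in e C <= n_edges_in e U.
Proof.
move=> partP; have tiP := partition_trivIset partP.
case/and3P: (partP) => /eqP covP _ _.
pose E C := [set [set x; y] | x in C, y in C & e x y].
have sub_EU C : C \in P -> E C \subset [set f in E U | f \subset C].
  move=> PC; have CU : C \subset U by rewrite -covP; apply: bigcup_sup.
  apply/subsetP => f /imset2P[x y xC]; rewrite inE => /andP[yC exy] {f}->.
  rewrite !inE subUset !sub1set xC yC !andbT.
  by apply/imset2P; exists x y; rewrite ?inE ?(subsetP CU) ?exy.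
(* Double counting: an edge of [U] lies inside at most one block of [P]. *)
have le_sum : \sum_(C in P) n_edges_in e C <=
    \sum_(C in P) \sum_(f | (f \in E U) && (f \subset C)) 1.
  apply: leq_sum => C PC; rewrite sum1dep_card.
  exact: subset_leq_card (sub_EU C PC).
apply: leq_trans le_sum _.
rewrite (exchange_big_dep (mem (E U))) /=; last by move=> C f _ /andP[].
rewrite [n_edges_in e U]/n_edges_in -/(E U) -sum1_card.
apply: leq_sum => f /imset2P[x y xU _ {f}->].
rewrite sum1dep_card; apply/card_le1_eqP => C D; rewrite !inE.
move=> /and3P[PC _ xyC] /and3P[PD _ xyD].
have xf : x \in [set x; y] by rewrite !inE eqxx.
by rewrite -(def_pblock tiP PC (subsetP xyC x xf)) (def_pblock tiP PD (subsetP xyD x xf)).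
Qed.

Lemma n_edges_in_cycle C : induces_cycle e C -> #|C| <= n_edges_in e C.
Proof.
case=> s [s3 us Cs adj].
have inj : {in s &, injective (fun x => [set x; next s x])}.
  move=> x y xs ys E; case: (eqVneq x y) => // nxy; exfalso.
  have : x \in [set y; next s y] by rewrite -E !inE eqxx.
  rewrite !inE (negbTE nxy) => /eqP x_ny.
  have : y \in [set x; next s x] by rewrite E !inE eqxx.
  rewrite !inE eq_sym (negbTE nxy) => /eqP y_nx.
  by have := next_neq_prev us s3 xs; rewrite -y_nx x_ny prev_next // eqxx.
rewrite (eq_card Cs) -(card_in_imset inj); apply: subset_leq_card.
apply/subsetP => f /imsetP[x xs {f}->].
have nxs : next s x \in s by rewrite mem_next.
apply/imset2P; exists x (next s x); rewrite ?inE ?Cs //.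
by rewrite nxs adj ?Cs // eqxx.
Qed.

Lemma n_edges_in_path C : induces_path e C -> #|C| <= (n_edges_in e C).+1.
Proof.
case=> s [s0 us Cs adj]; set Z := zip s (behead s).
have mem2 z a b : z \in [set a; b] -> index z s = index a s \/ index z s = index b s.
  by rewrite !inE => /orP[] /eqP->; [left | right].
have inj : {in Z &, injective (fun p : T * T => [set p.1; p.2])}.
  move=> [x y] [x' y']; rewrite !mem_zip_behead //= => /and3P[xs ys /eqP iy].
  move=> /and3P[xs' ys' /eqP iy'] E.
  have ix := mem2 x x' y'; have ix' := mem2 x' x y.
  rewrite -E !inE eqxx /= in ix; rewrite E !inE eqxx /= in ix'.
  have ixx' : index x s = index x' s by lia.
  have -> : x' = x by apply: (index_inj x xs' xs).
  by have -> : y' = y by apply: (index_inj x ys' ys); rewrite iy iy' ixx'.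
have sub : [set [set p.1; p.2] | p in Z] \subset
           [set [set x; y] | x in C, y in C & e x y].
  apply/subsetP => f /imsetP[[x y] xyZ {f}->] /=.
  have := xyZ; rewrite mem_zip_behead // => /and3P[xs ys _].
  apply/imset2P; exists x y; rewrite ?inE ?Cs //.
  by rewrite ys adj ?Cs // xyZ.
have := subset_leq_card sub; rewrite card_in_imset // (card_uniqP (zip_uniql _ us)).
rewrite size2_zip ?size_behead ?leq_pred // (eq_card Cs) (card_uniqP us).
have : 0 < size s by rewrite lt0n size_eq0.
rewrite /n_edges_in; lia.
Qed.

Lemma n_edges_in_cycles_and_paths U :
  cycles_and_at_most_2_paths e U -> #|U| - 2 <= n_edges_in e U.
Proof.
case=> Pc [Pp [[partP dis] cycP pathP _ Pp2]].
have cyc_le : \sum_(C in Pc) #|C| <= \sum_(C in Pc) n_edges_in e C.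
  by apply: leq_sum => C /cycP /n_edges_in_cycle.
have path_le : \sum_(C in Pp) #|C| <= \sum_(C in Pp) n_edges_in e C + #|Pp|.
  rewrite -sum1_card -big_split; apply: leq_sum => C /pathP /n_edges_in_path.
  by rewrite /= addn1.
have sumU F : \sum_(C in Pc :|: Pp) F C = \sum_(C in Pc) F C + \sum_(C in Pp) F C.
  by rewrite -bigU //; apply: eq_bigl => C; rewrite !inE.
have := n_edges_in_partition partP; rewrite (card_partition partP) !sumU.
lia.
Qed.
End InducedEdges.

(* Since [next c y = y] when [y \notin c], the adjacency equation also says
   that no edge leaves [c]. *)
Definition cycle_component (T : eqType) (e : rel T) (c : seq T) : Prop :=
  [/\ uniq c, 3 <= size c &
      forall x y, x \in c -> e x y = (y == next c x) || (x == next c y)].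

Section CycleComponent.
Variables (T : finType) (e : rel T) (c : seq T).
Hypothesis comp_c : cycle_component e c.

Lemma cycle_component_closed x y : x \in c -> e x y -> y \in c.
Proof.
case: comp_c => _ _ adj xc; rewrite adj // => /orP[/eqP-> | /eqP x_ny].
  by rewrite mem_next.
by rewrite -(mem_next c) -x_ny.
Qed.

Lemma induces_cycle_component : induces_cycle e [set x in c].
Proof.
case: comp_c => uc c3 adj; exists c; split=> // [x | x y]; first by rewrite inE.
by rewrite !inE => xc _; apply: adj.
Qed.

Lemma induces_path_arc u v : u < size c -> u < v -> (0 < u) || (v < size c) ->
  induces_path e [set x in c | u <= index x c < v].
Proof.
case: comp_c => uc c3 adj u_lt uv /orP proper.
(* Adjacency in [c] is a difference of positions of 1 modulo [size c]; the
   wrap-around pair (last, first position) does not lie in a proper arc. *)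
set w := take (minn v (size c) - u) (drop u c).
have uw : uniq w by rewrite take_uniq ?drop_uniq.
have memw x : (x \in w) = (x \in c) && (u <= index x c < v).
  rewrite mem_take_drop_uniq //; case xc: (x \in c) => //=.
  have ix : index x c < size c by rewrite index_mem xc.
  by apply/andP/andP => -[? ?]; split; lia.
have eq_idx z z' : z \in c -> z' \in c -> (z == z') = (index z c == index z' c).
  by move=> zc z'c; apply/eqP/eqP => [-> | /(index_inj z zc z'c)].
exists w; split=> //.
- by rewrite -size_eq0 size_takel ?size_drop ?leq_sub2r ?geq_minr // -lt0n; lia.
- by move=> x; rewrite inE memw.
move=> x y; rewrite !inE -!memw => xw yw.
have := xw; have := yw; rewrite !memw => /andP[yc yr] /andP[xc xr].
rewrite adj // !mem_zip_behead // xw yw !index_take_drop_uniq // /=.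
rewrite eq_idx ?mem_next // (eq_idx x) ?mem_next // !index_next //.
have ix : index x c < size c by rewrite index_mem.
have iy : index y c < size c by rewrite index_mem.
have [ex | /eqP ex] := eqVneq (index x c).+1 (size c);
  have [ey | /eqP ey] := eqVneq (index y c).+1 (size c).
all: apply/idP/idP => /orP[] /eqP h; apply/orP;
  [left | right | left | right]; apply/eqP; lia.
Qed.
End CycleComponent.

Section Paths.
Variables (T : finType) (e : rel T).

Lemma exists_maximal_path x0 : exists p,
  [/\ uniq (x0 :: p), path e x0 p & forall y, e (last x0 p) y -> y \in x0 :: p].
Proof.
suff ext p : uniq (x0 :: p) -> path e x0 p -> exists p',
    [/\ uniq (x0 :: p'), path e x0 p' & forall y, e (last x0 p') y -> y \in x0 :: p'].
  exact: ext [::] _ _.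
have [n] := ubnP (#|T| - size p); elim: n p => // n IH p lt_n up pp.
case: (pickP [pred y | e (last x0 p) y & y \notin x0 :: p]) => [y /andP[ey yp] | none].
  have : size (x0 :: p) <= #|T| by rewrite -(card_uniqP up) max_card.
  move=> le_T; apply: (IH (rcons p y)).
  - by rewrite size_rcons; move: le_T lt_n => /=; lia.
  - by rewrite -rcons_cons rcons_uniq yp.
  - by rewrite rcons_path pp.
by exists p; split=> // y ey; have := none y; rewrite /= ey => /negbFE.
Qed.

Lemma path_closed (S : {set T}) x0 p :
  (forall x y, x \in S -> e x y -> y \in S) -> x0 \in S -> path e x0 p ->
  {subset x0 :: p <= S}.
Proof.
move=> clS; elim: p x0 => [|y p IH] x0 x0S /=; first by move=> _ z /[!inE] /eqP->.
by case/andP=> ey pp z /[!inE] /orP[/eqP-> // | ]; apply: IH (clS _ _ x0S ey) pp z.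
Qed.
End Paths.

Section ExistsCycle.
Variables (T : finType) (e : rel T).
Hypothesis e_irr : irreflexive e.
Hypothesis deg_ge2 : forall x, 1 < #|[set y | e x y]|.

Lemma exists_cycle (S : {set T}) x0 :
  (forall x y, x \in S -> e x y -> y \in S) -> x0 \in S ->
  exists c, [/\ cycle e c, uniq c, 3 <= size c & {subset c <= S}].
Proof.
move=> clS x0S; have [p [up pp maxp]] := exists_maximal_path e x0.
have pS := path_closed clS x0S pp.
case/lastP: p up pp maxp pS => [|r z] up pp maxp pS.
  have := deg_ge2 x0; rewrite ltnNge -(cards1 x0) subset_leq_card //.
  by apply/subsetP => y; rewrite !inE => /maxp; rewrite inE.
rewrite last_rcons in maxp; move: pp; rewrite rcons_path => /andP[pr ez].
move: up; rewrite -rcons_cons rcons_uniq => /andP[zq uq].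
set q := x0 :: r in pr ez zq uq pS; set w' := last x0 r in ez.
(* The endpoint [z] has a neighbour [w] other than its predecessor [w'];
   [w] lies on the path, and the segment from [w] to [z] closes up. *)
have : 0 < #|[set y | e z y] :\ w'|.
  have := leq_b1 (w' \in [set y | e z y]); have := deg_ge2 z.
  rewrite (cardsD1 w'); lia.
case/card_gt0P => w /[!inE] /andP[ww' ezw].
have wq : w \in q.
  move: (maxp w ezw); rewrite -rcons_cons mem_rcons inE => /orP[/eqP wz | //].
  by rewrite wz e_irr in ezw.
have dq : drop (index w q) q = w :: drop (index w q).+1 q by rewrite drop_index.
exists (rcons (drop (index w q) q) z); split.
- rewrite dq rcons_cons [cycle _ _]/= !rcons_path last_rcons ezw andbT.
  have := @drop_sorted _ e (index w q) q pr; rewrite dq [sorted _ _]/= => ->.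
  have : e (last x0 q) z := ez.
  by rewrite -[in last x0 q](cat_take_drop (index w q) q) last_cat dq.
- by rewrite rcons_uniq drop_uniq // andbT; apply: contra zq; apply: mem_drop.
- have iw' : index w' q = size r by rewrite index_last.
  have : index w q != size r.
    rewrite -iw'; apply: contra ww' => /eqP.
    by move/(index_inj x0 wq (mem_last x0 r)) ->.
  have := index_mem w q; rewrite wq size_rcons size_drop /=; lia.
- move=> y; rewrite mem_rcons inE => /orP[/eqP-> | /mem_drop yq]; apply: pS.
    by rewrite -rcons_cons mem_rcons mem_head.
  by rewrite -rcons_cons mem_rcons inE yq orbT.
Qed.
End ExistsCycle.

Section TwoFactor.
Variables (T : finType) (e : rel T).
Hypotheses (e_sym : symmetric e) (e_irr : irreflexive e).
Hypothesis deg2 : forall x, #|[set y | e x y]| = 2.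

Lemma two_factor_cycle_component c :
  cycle e c -> uniq c -> 3 <= size c -> cycle_component e c.
Proof.
move=> cyc uc c3; split=> // x y xc.
have nbrs : [set y | e x y] = [set next c x; prev c x].
  apply/esym/eqP; rewrite eqEcard cards2 next_neq_prev // deg2 andbT.
  apply/subsetP => z; rewrite !inE => /orP[] /eqP->; first exact: next_cycle.
  by rewrite e_sym; apply: prev_cycle.
have -> : e x y = (y \in [set y | e x y]) by rewrite inE.
rewrite nbrs !inE; congr (_ || _).
by apply/eqP/eqP => [-> | ->]; rewrite ?next_prev ?prev_next.
Qed.

Lemma two_factor_cycle_decomposition : exists cs : seq (seq T),
  [/\ uniq (flatten cs), forall x, x \in flatten cs &
      forall c, c \in cs -> cycle_component e c].
Proof.
suff gen (S : {set T}) : (forall x y, x \in S -> e x y -> y \in S) ->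
    exists cs : seq (seq T), [/\ uniq (flatten cs), S =i flatten cs &
      forall c, c \in cs -> cycle_component e c].
  have [cs [ucs Scs comp_cs]] := gen setT (fun x y _ _ => in_setT y).
  by exists cs; split=> // x; rewrite -Scs inE.
have [n ltS] := ubnP #|S|; elim: n S ltS => // n IH S ltS clS.
have [-> | [x0 x0S]] := set_0Vmem S; first by exists [::]; split=> // x; rewrite inE.
have deg_ge2 x : 1 < #|[set y | e x y]| by rewrite deg2.
have [c [cyc uc c3 cS]] := exists_cycle e_irr deg_ge2 clS x0S.
have comp_c := two_factor_cycle_component cyc uc c3.
set S' := S :\: [set x in c].
have clS' x y : x \in S' -> e x y -> y \in S'.
  rewrite !inE => /andP[xc xS] exy; rewrite (clS x y xS exy) andbT.
  by apply: (contra _ xc) => yc; apply: (cycle_component_closed comp_c yc); rewrite e_sym.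
have c0 : nth x0 c 0 \in c by rewrite mem_nth // (ltn_trans _ c3).
have ltS' : #|S'| < n.
  suff : #|S'| < #|S| by lia.
  rewrite (cardsD1 (nth x0 c 0) S) cS // add1n ltnS.
  by apply: subset_leq_card; apply/subsetP => y /[!inE] /andP[yc ->];
    rewrite andbT; apply: contraNneq yc => ->.
have [cs [ucs Ecs comp_cs]] := IH S' ltS' clS'.
exists (c :: cs); split=> /=.
- rewrite cat_uniq uc ucs andbT /=.
  by apply/hasPn => y; rewrite -Ecs !inE => /andP[].
- by move=> y; rewrite mem_cat -Ecs !inE; case: (boolP (y \in c)) => //= /cS ->.
- by move=> c' /[!inE] /orP[/eqP-> // | /comp_cs].
Qed.
End TwoFactor.

Section ComponentWindows.
Variables (T : finType) (e : rel T) (cs : seq (seq T)).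
Hypothesis ucs : uniq (flatten cs).
Hypothesis comp_cs : forall c, c \in cs -> cycle_component e c.

(* Junk value [[::]] when [x] lies on no cycle of [cs]. *)
Definition cycle_of x := nth [::] cs (find (fun c => x \in c) cs).

Lemma cycle_of_in x : x \in flatten cs -> cycle_of x \in cs /\ x \in cycle_of x.
Proof.
case/flattenP => c c_cs xc.
have has_x : has (fun c => x \in c) cs by apply/hasP; exists c.
by split; [rewrite mem_nth // -has_find | exact: (nth_find [::] has_x)].
Qed.

Lemma cycle_ofE c x : c \in cs -> x \in c -> cycle_of x = c.
Proof.
move=> c_cs xc; have x_cs : x \in flatten cs by apply/flattenP; exists c.
have [cx_cs x_cx] := cycle_of_in x_cs.
exact: uniq_flatten_mem ucs cx_cs c_cs x_cx xc.
Qed.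

Variables a b : nat.
Hypothesis b_le : b <= size (flatten cs).

Local Notation s := (flatten cs).
Let U := [set x | a <= index x s < b].
Let piece x := U :&: [set y in cycle_of x].
Let full x := [set y in cycle_of x] \subset U.

Lemma window_sub x : x \in U -> x \in s.
Proof. by rewrite inE -index_mem => /andP[_ /leq_trans]; apply. Qed.

Lemma piece_cycle_of x y : x \in s -> y \in piece x -> cycle_of y = cycle_of x.
Proof. by move=> /cycle_of_in[cx_cs _] /setIP[_]; rewrite inE; apply: cycle_ofE. Qed.

Lemma piece_partition : partition [set piece x | x in U] U.
Proof.
apply/and3P; split.
- apply/eqP/setP => y; apply/bigcupP/idP => [[_ /imsetP[x _ ->] /setIP[] //] | yU].
  exists (piece y); first exact: imset_f.
  by rewrite inE yU inE (cycle_of_in (window_sub yU)).2.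
- apply/trivIsetP => _ _ /imsetP[x xU ->] /imsetP[x' x'U ->] neq.
  apply/pred0P => y /=; apply/negP => /andP[yx yx']; move: neq.
  rewrite /piece -(piece_cycle_of (window_sub xU) yx).
  by rewrite (piece_cycle_of (window_sub x'U) yx') eqxx.
- apply/imsetP => -[x xU /setP/(_ x)].
  by rewrite in_set0 in_setI xU inE (cycle_of_in (window_sub xU)).2.
Qed.

Lemma partial_piece x : x \in U -> ~~ full x ->
  induces_path e (piece x) /\
  exists2 w, w \in piece x & (index w s == a) || (index w s == b.-1).
Proof.
move=> xU /subsetPn[z]; rewrite inE => zc zU.
have [cx_cs xc] := cycle_of_in (window_sub xU); set c := cycle_of x in zc xc cx_cs *.
have [o idx] := index_flatten ucs cx_cs.
have [uc _ _] := comp_cs cx_cs.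
have pieceE : piece x = [set y in c | a - o <= index y c < b - o].
  apply/setP => y; rewrite !inE andbC; case yc: (y \in c) => //=.
  by rewrite idx //; apply/andP/andP => -[? ?]; split; lia.
have ix : index x c < size c by rewrite index_mem.
have iz : index z c < size c by rewrite index_mem.
move: xU zU; rewrite !inE !idx // => /andP[x_a x_b] z_ab.
split.
  rewrite pieceE.
  apply: (induces_path_arc (comp_cs cx_cs)); try lia.
have [o_a | a_o] := ltnP o a.
  have lt_c : a - o < size c by lia.
  exists (nth x c (a - o)); first by rewrite pieceE inE mem_nth // index_uniq //; lia.
  by rewrite idx ?mem_nth // index_uniq //; lia.
have lt_c : (b - o).-1 < size c by lia.
exists (nth x c (b - o).-1); first by rewrite pieceE inE mem_nth // index_uniq //; lia.
by rewrite idx ?mem_nth // index_uniq //; lia.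
Qed.

Let Pc := [set piece x | x in U & full x].
Let Pp := [set piece x | x in U & ~~ full x].

Lemma partial_pieces_card : #|Pp| <= 2.
Proof.
have [-> | [_ /imsetP[x0 _ _]]] := set_0Vmem Pp; first by rewrite cards0.
suff : Pp \subset [set piece (nth x0 s a); piece (nth x0 s b.-1)].
  by move/subset_leq_card/leq_trans; apply; rewrite cards2; case: (_ != _).
apply/subsetP => C /imsetP[x]; rewrite inE => /andP[xU not_full] ->.
have [_ [w wx idx_w]] := partial_piece xU not_full.
have ws : w \in s by apply: window_sub; case/setIP: wx.
have -> : piece x = piece w by rewrite /piece (piece_cycle_of (window_sub xU) wx).
by rewrite !inE -(nth_index x0 ws); case/orP: idx_w => /eqP->; rewrite eqxx ?orbT.
Qed.

Lemma window_cycles_and_paths : cycles_and_at_most_2_paths e U.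
Proof.
have PcPp : Pc :|: Pp = [set piece x | x in U].
  have UE : U = [set x in U | full x] :|: [set x in U | ~~ full x].
    by apply/setP => x; rewrite !inE; case: (full x); rewrite ?andbT ?andbF ?orbF.
  by rewrite [in RHS]UE imsetU.
exists Pc, Pp; split.
- split; first by rewrite PcPp piece_partition.
  rewrite -setI_eq0; apply/eqP/setP => C; rewrite !inE.
  apply/negP => /andP[/imsetP[x + ->]]; rewrite inE => /andP[xU fx].
  case/imsetP => x'; rewrite inE => /andP[x'U nfx'] E.
  have xx' : x \in piece x'.
    by rewrite -E inE xU inE (cycle_of_in (window_sub xU)).2.
  by move: nfx'; rewrite /full -(piece_cycle_of (window_sub x'U) xx') -/(full x) fx.
- move=> C /imsetP[x]; rewrite inE => /andP[xU fx] ->; rewrite /piece (setIidPr fx).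
  by apply: induces_cycle_component; apply: comp_cs; case: (cycle_of_in (window_sub xU)).
- move=> C /imsetP[x]; rewrite inE => /andP[xU nfx] ->.
  by case: (partial_piece xU nfx).
- rewrite PcPp => _ _ /imsetP[x xU ->] /imsetP[x' x'U ->] neq y z yx zx'.
  apply: contra neq => eyz.
  have [cy_cs y_cy] := cycle_of_in (window_sub (setIP yx).1).
  have cz : cycle_of z = cycle_of y.
    exact/(cycle_ofE cy_cs)/(cycle_component_closed (comp_cs cy_cs) y_cy eyz).
  rewrite /piece -(piece_cycle_of (window_sub xU) yx).
  by rewrite -(piece_cycle_of (window_sub x'U) zx') cz.
- exact: partial_pieces_card.
Qed.
End ComponentWindows.

Lemma card_index_window (T : finType) (s : seq T) a b : uniq s -> b <= size s ->
  #|[set x | a <= index x s < b]| = b - a.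
Proof.
move=> us b_le.
have -> : [set x | a <= index x s < b] = [set x in take (b - a) (drop a s)].
  apply/setP => x; rewrite !inE mem_take_drop_uniq //; case xs: (x \in s) => /=.
    by apply/andP/andP => -[? ?]; split; lia.
  by rewrite memNindex ?xs // ltnNge b_le andbF.
rewrite cardsE (card_uniqP _) ?take_uniq ?drop_uniq //.
by rewrite size_takel // size_drop leq_sub2r.
Qed.

Definition part_lo n k i := if i == 0 then n %/ k * k else i.-1 * k.
Definition part_hi n k i := if i == 0 then n else i * k.
Definition part_of n k p := if p %/ k < n %/ k then (p %/ k).+1 else 0.

Lemma part_ofP n k p i : 0 < k -> p < n -> i <= n %/ k ->
  (part_lo n k i <= p < part_hi n k i) = (i == part_of n k p).
Proof.
move=> k0 p_n i_q; rewrite /part_lo /part_hi /part_of.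
case: i i_q => [|i] i_q /=; first by rewrite p_n andbT -leq_divRL //; case: ltnP.
rewrite -leq_divRL // -ltn_divLR //; move: i_q.
case: (ltnP (p %/ k) (n %/ k)); move: (p %/ k) (n %/ k) => d q d_q i_q.
  by apply/idP/idP; lia.
by apply/idP/idP; lia.
Qed.

Lemma part_of_le n k p : part_of n k p <= n %/ k.
Proof. by rewrite /part_of; case: ltnP. Qed.

Lemma part_hi_le n k i : i <= n %/ k -> part_hi n k i <= n.
Proof.
rewrite /part_hi; case: eqP => // _ i_q.
by apply: leq_trans (leq_divM n k); rewrite leq_mul2r i_q orbT.
Qed.

Lemma part_size n k i : 0 < i -> part_hi n k i - part_lo n k i = k.
Proof. by case: i => // i _; rewrite /part_lo /part_hi /= mulSn addnK. Qed.

Theorem lemma3p7 (k n : nat) (T : finType) (e : rel T) :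
  0 < k -> #|T| = n -> two_factor e ->
  exists U : 'I_(n %/ k).+1 -> {set T},
    [/\ (forall i j, i != j -> [disjoint U i & U j]),
        \bigcup_i U i = [set: T],
        (forall i : 'I_(n %/ k).+1, 0 < i -> #|U i| = k),
        (forall i, cycles_and_at_most_2_paths e (U i))
      & (forall i : 'I_(n %/ k).+1, 0 < i -> k - 2 <= n_edges_in e (U i))].
Proof.
move=> k0 card_T [[e_sym e_irr] deg2].
have [cs [ucs cs_all comp_cs]] := two_factor_cycle_decomposition e_sym e_irr deg2.
set s := flatten cs in ucs cs_all.
have size_s : size s = n.
  by rewrite -card_T -(card_uniqP ucs); apply: eq_card => x; rewrite cs_all.
pose U (i : 'I_(n %/ k).+1) := [set x | part_lo n k i <= index x s < part_hi n k i].
have hi_le (i : 'I_(n %/ k).+1) : part_hi n k i <= size s.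
  by rewrite size_s part_hi_le // -ltnS.
have U_paths (i : 'I_(n %/ k).+1) : cycles_and_at_most_2_paths e (U i).
  exact (window_cycles_and_paths ucs comp_cs (part_lo n k i) (hi_le i)).
have card_U (i : 'I_(n %/ k).+1) : 0 < i -> #|U i| = k.
  by move=> i0; rewrite card_index_window // part_size.
have idx_lt x : index x s < n by rewrite -size_s index_mem.
have mem_U i x : (x \in U i) = (val i == part_of n k (index x s)).
  by rewrite inE (part_ofP k0 (idx_lt x) (ltn_ord i)).
exists U; split=> [i j ij | | // | // | i i0].
- rewrite -setI_eq0; apply/eqP/setP => x; rewrite in_setI !mem_U in_set0.
  by apply: contraNF ij => /andP[/eqP ei /eqP ej]; apply/eqP/val_inj; rewrite /= ei ej.
- apply/setP => x; rewrite inE; apply/bigcupP.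
  by exists (Ordinal (part_of_le n k (index x s) : _ < (n %/ k).+1)); rewrite ?mem_U.
- by rewrite -(card_U i i0); apply: n_edges_in_cycles_and_paths.
Qed.
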